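(* Let $G$ be a connected graph with at least one edge, and let $l(G)=\min\{|L(uv)|: uv\in E(G)\}$. Then $l(G)=|V(G)|-1$ if and only if $G$ is isomorphic to a cycle of odd length.
   Context: All graphs are finite and simple; $d$ is the shortest-path distance. For an edge $uv$, $L(uv)=\{x\in V(G): d(u,x)\neq d(v,x)\}$. *)

(* A simple graph is a symmetric irreflexive relation e on a finType T. *)
From mathcomp Require Import all_boot.
Set Implicit Arguments. Unset Strict Implicit. Unset Printing Implicit Defensive.

Section Graph.
Variables (T : finType) (e : rel T).

Fixpoint ball (k : nat) (u : T) : {set T} :=
  match k with
  | 0 => [set u]
  | k'.+1 => ball k' u :|: [set y | [exists x in ball k' u, e x y]]
  end.

(* shortest-path distance: least k with x in ball k u
   (equals #|T| when x is unreachable; irrelevant for connected graphs) *)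
Definition dist (u x : T) : nat :=
  find (fun k => x \in ball k u) (iota 0 #|T|).

Definition L (u v : T) : {set T} := [set x | dist u x != dist v x].

Definition connected : Prop := forall x y : T, connect e x y.

Definition lG : nat :=
  \big[minn/#|T|]_(p : T * T | e p.1 p.2) #|L p.1 p.2|.
End Graph.

(* the cycle C_n on vertex set 'I_n (a cycle graph when n >= 3) *)
Definition cycle_rel (n : nat) : rel 'I_n :=
  fun i j => (nat_of_ord j == (i.+1 %% n)) || (nat_of_ord i == (j.+1 %% n)).

Definition iso_odd_cycle (T : finType) (e : rel T) : Prop :=
  exists n : nat, [/\ odd n, 3 <= n &
    exists f : 'I_n -> T, bijective f /\ forall i j, e (f i) (f j) = @cycle_rel n i j].

From mathcomp Require Import all_boot zify.
Set Implicit Arguments. Unset Strict Implicit. Unset Printing Implicit Defensive.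

(* If l(G) = |V| - 1, every edge has at most one vertex equidistant from its ends,
   and some edge has one; gluing two shortest paths to that vertex along the edge
   gives an odd closed walk.  A shortest odd closed walk is an induced cycle: a
   repeated vertex or a chord would split it into two shorter closed walks, one of
   them odd.  Along an odd closed walk the distance to a fixed vertex x cannot
   change at every step, by parity, so every vertex is the equidistant vertex of
   one of its edges; hence the cycle has at least |V| vertices and is all of G.
   Conversely, on an odd cycle the equidistant vertex of an edge is exactly the
   antipodal one. *)

Section Walks.
Variables (T : Type) (e : rel T).

Definition walk (p : nat -> T) (n : nat) : Prop := forall k, k < n -> e (p k) (p k.+1).

Definition closed_walk (p : nat -> T) (n : nat) : Prop := walk p n /\ p n = p 0.

Definition wcat (p : nat -> T) (m : nat) (q : nat -> T) (k : nat) : T :=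
  if k <= m then p k else q (k - m).

Definition edge_walk (x y : T) (k : nat) : T := if k is 0 then x else y.

Definition arc (p : nat -> T) (n b : nat) : nat -> T := wcat (fun k => p (b + k)) (n - b) p.

Lemma walk_shift p n a m : walk p n -> a + m <= n -> walk (fun k => p (a + k)) m.
Proof. by move=> walk_p le_n k lt_k; rewrite addnS; apply: walk_p; lia. Qed.

Lemma walk_prefix p n m : walk p n -> m <= n -> walk p m.
Proof. by move=> walk_p le_n k lt_k; apply: walk_p; lia. Qed.

Lemma walk_edge x y : e x y -> walk (edge_walk x y) 1.
Proof. by move=> xy [|]. Qed.

Lemma walk_cat p q m n : walk p m -> walk q n -> p m = q 0 -> walk (wcat p m q) (m + n).
Proof.
move=> walk_p walk_q pq k lt_k; rewrite /wcat.
case: (ltngtP k m) => [lt_km|lt_mk|eq_km]; first exact: walk_p.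
  by rewrite subSn ?(ltnW lt_mk) //; apply: walk_q; lia.
by rewrite eq_km subSnn pq; apply: walk_q; lia.
Qed.

Lemma wcat_last p q m n : p m = q 0 -> wcat p m q (m + n) = q n.
Proof.
move=> pq; rewrite /wcat; case: n => [|n]; first by rewrite addn0 leqnn.
by rewrite addKn leqNgt addnS ltnS leq_addr.
Qed.

Lemma walk_rev p n : symmetric e -> walk p n -> walk (fun k => p (n - k)) n.
Proof.
move=> e_sym walk_p k lt_k; rewrite e_sym.
have -> : n - k = (n - k.+1).+1 by lia.
by apply: walk_p; lia.
Qed.

Lemma walk_arc p n a b : closed_walk p n -> a <= n -> b <= n -> walk (arc p n b) (n - b + a).
Proof.
move=> [walk_p closed_p] le_an le_bn; apply: walk_cat.
- by apply: walk_shift walk_p _; lia.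
- exact: walk_prefix walk_p le_an.
- by rewrite subnKC.
Qed.

Lemma arc0 p n b : arc p n b 0 = p b.
Proof. by rewrite /arc /wcat /= addn0. Qed.

Lemma arc_last p n a b : closed_walk p n -> b <= n -> arc p n b (n - b + a) = p a.
Proof. by move=> [_ closed_p] le_bn; rewrite /arc wcat_last // subnKC. Qed.

Lemma odd_closed_walk_split p q m n N :
  closed_walk p m -> closed_walk q n -> odd (m + n) -> m < N -> n < N ->
  exists r M, [/\ M < N, odd M & closed_walk r M].
Proof.
move=> cp cq; rewrite oddD; case: (boolP (odd m)) => [odd_m _ lt_m _|_ odd_n _ lt_n].
- by exists p, m.
- by exists q, n.
Qed.

Lemma odd_closed_walk_repeat p n a b : closed_walk p n -> odd n ->
  a < b < n -> p a = p b -> exists r M, [/\ M < n, odd M & closed_walk r M].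
Proof.
move=> cp odd_n /andP[lt_ab lt_bn] pab.
apply: (@odd_closed_walk_split (fun k => p (a + k)) (arc p n b) (b - a) (n - b + a)).
- split; first by apply: walk_shift cp.1 _; lia.
  by rewrite subnKC ?pab ?addn0 // ltnW.
- split; first by apply: walk_arc cp _ _; lia.
  by rewrite arc_last ?arc0 //; lia.
- by have -> : b - a + (n - b + a) = n by lia.
- lia.
- lia.
Qed.

Lemma odd_closed_walk_chord p n a b : symmetric e -> closed_walk p n -> odd n ->
  a.+1 < b < n -> ~~ ((a == 0) && (b == n.-1)) -> e (p a) (p b) ->
  exists r M, [/\ M < n, odd M & closed_walk r M].
Proof.
move=> e_sym cp odd_n /andP[lt_ab lt_bn] not_diameter ab.
apply: (@odd_closed_walk_split (wcat (fun k => p (a + k)) (b - a) (edge_walk (p b) (p a)))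
         (wcat (arc p n b) (n - b + a) (edge_walk (p a) (p b))) (b - a + 1) (n - b + a + 1)).
- split; last by rewrite wcat_last /wcat /= ?addn0 // subnKC //; lia.
  apply: walk_cat; first by apply: walk_shift cp.1 _; lia.
    by apply: walk_edge; rewrite e_sym.
  by rewrite subnKC //; lia.
- split; last by rewrite wcat_last ?arc_last /wcat ?arc0 //; lia.
  apply: walk_cat; first by apply: walk_arc cp _ _; lia.
    exact: walk_edge.
  by rewrite arc_last //; lia.
- by rewrite (_ : b - a + 1 + (n - b + a + 1) = n.+2) /= ?negbK //; lia.
- by move: not_diameter; rewrite negb_and; case/orP; lia.
- lia.
Qed.

End Walks.

Section Distance.
Variables (T : finType) (e : rel T).

Lemma ball_edge k u y z : y \in ball e k u -> e y z -> z \in ball e k.+1 u.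
Proof.
move=> yk yz; rewrite /= !inE; apply/orP; right.
by apply/existsP; exists y; rewrite yk.
Qed.

Lemma dist_leq k u x : x \in ball e k u -> dist e u x <= k.
Proof.
move=> xk; rewrite /dist; have [lt_k|le_k] := ltnP k #|T|; last first.
  by apply: leq_trans (find_size _ _) _; rewrite size_iota.
rewrite leqNgt; apply/negP => /(before_find 0).
by rewrite nth_iota // add0n xk.
Qed.

Lemma walk_ball p n : walk e p n -> p n \in ball e n (p 0).
Proof.
elim: n => [|n IHn] walk_p; first by rewrite inE.
apply: (ball_edge (y := p n)); last exact: walk_p.
by apply: IHn; apply: walk_prefix walk_p _.
Qed.

Lemma ball_walk k u x : x \in ball e k u ->
  exists n p, [/\ n <= k, p 0 = u, p n = x & walk e p n].
Proof.
elim: k x => [|k IHk] x /=.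
  by rewrite inE => /eqP ->; exists 0, (fun=> u); split.
rewrite inE => /orP[/IHk [n [p [le_nk p0 pn walk_p]]]|].
  by exists n, p; split => //; apply: leqW.
rewrite inE => /existsP[y /andP[/IHk [n [p [le_nk p0 pn walk_p]]] yx]].
exists n.+1, (wcat p n (edge_walk y x)); split => //.
- by rewrite -[n.+1]addn1 wcat_last.
- by rewrite -[n.+1]addn1; apply: walk_cat => //; apply: walk_edge.
Qed.

Lemma path_ball u s : path e u s -> last u s \in ball e (size s) u.
Proof.
elim/last_ind: s => [|s z IHs]; first by rewrite inE.
rewrite rcons_path last_rcons size_rcons => /andP[/IHs su sz].
exact: ball_edge su sz.
Qed.

Lemma connect_ball u x : connect e u x -> exists2 k, k < #|T| & x \in ball e k u.
Proof.
case/connectP => s es ->; have [s' es' uniq_s' _] := shortenP es.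
exists (size s'); last exact: path_ball.
by rewrite -ltnS -[(size s').+1]/(size (u :: s')) -(card_uniqP uniq_s'); apply: max_card.
Qed.

Lemma mem_ball_dist u x : connect e u x -> x \in ball e (dist e u x) u.
Proof.
case/connect_ball => k lt_k xk.
have has_k : has (fun k => x \in ball e k u) (iota 0 #|T|).
  by apply/hasP; exists k; rewrite ?mem_iota.
have lt_dist : dist e u x < #|T| by rewrite /dist -{2}(size_iota 0 #|T|) -has_find.
by have := nth_find 0 has_k; rewrite nth_iota.
Qed.

Lemma geodesic u x : connect e u x ->
  exists p, [/\ p 0 = u, p (dist e u x) = x & walk e p (dist e u x)].
Proof.
move/mem_ball_dist/ball_walk => [n [p [le_n p0 pn walk_p]]].
suff eq_n : n = dist e u x by exists p; rewrite -eq_n.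
by apply/eqP; rewrite eqn_leq le_n -pn -p0 dist_leq // walk_ball.
Qed.

Hypothesis e_conn : connected e.

Lemma dist_edge a b x : e a b -> dist e a x <= (dist e b x).+1.
Proof.
move=> ab; have [p [p0 px walk_p]] := geodesic (e_conn b x).
pose q := wcat (edge_walk a b) 1 p.
have qx : q (1 + dist e b x) = x by rewrite /q wcat_last.
have walk_q : walk e q (1 + dist e b x) by apply: walk_cat => //; apply: walk_edge.
by have := walk_ball walk_q; rewrite qx add1n => /dist_leq.
Qed.

Lemma dist_layering u (h : T -> nat) : h u = 0 ->
    (forall a b, e a b -> h b <= (h a).+1) ->
    (forall x, x != u -> exists2 y, e y x & (h y).+1 = h x) ->
  forall x, dist e u x = h x.
Proof.
move=> hu0 h_lip h_pred.
have ballE k x : (x \in ball e k u) = (h x <= k).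
  elim: k x => [|k IHk] x /=.
    rewrite inE; apply/eqP/idP => [->|]; first by rewrite hu0.
    by apply: contraTeq => /h_pred [y _ <-].
  rewrite inE IHk inE; apply/orP/idP => [[//|]|le_x]; first exact: leqW.
    by case/existsP => y /andP[]; rewrite IHk => le_y /h_lip; lia.
  have [le_xk|gt_xk] := leqP (h x) k; [by left | right].
  have /h_pred[y yx hy] : x != u by apply: contraTneq gt_xk => ->; rewrite hu0.
  by apply/existsP; exists y; rewrite IHk yx andbT; lia.
move=> x; apply/eqP; rewrite eqn_leq dist_leq ?ballE //=.
by rewrite -ballE mem_ball_dist.
Qed.

Hypothesis e_sym : symmetric e.

Lemma odd_closed_walk_equidistant p n x : closed_walk e p n -> odd n ->
  exists k : 'I_n, dist e (p k) x = dist e (p k.+1) x.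
Proof.
move=> [walk_p closed_p] odd_n.
have [/existsP[k /eqP eq_k]|/existsPn neq] :=
  boolP [exists k : 'I_n, dist e (p k) x == dist e (p k.+1) x]; first by exists k.
have parity k : k <= n -> odd (dist e (p k) x) = odd (dist e (p 0) x) (+) odd k.
  elim: k => [|k IHk] lt_k; first by rewrite addbF.
  have le1 := dist_edge x (walk_p k lt_k).
  have le2 : dist e (p k.+1) x <= (dist e (p k) x).+1.
    by apply: dist_edge; rewrite e_sym; apply: walk_p.
  have /= /eqP ne := neq (Ordinal lt_k).
  have step : odd (dist e (p k.+1) x) = ~~ odd (dist e (p k) x).
    have [->|->] : dist e (p k.+1) x = (dist e (p k) x).+1 \/
                   dist e (p k) x = (dist e (p k.+1) x).+1 by lia.
      by [].
    by rewrite /= negbK.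
  by rewrite step IHk 1?ltnW //= addbN.
by have := parity n (leqnn n); rewrite closed_p odd_n; case: (odd _).
Qed.

Lemma equidistant_odd_closed_walk u v x : e u v -> dist e u x = dist e v x ->
  exists p n, odd n /\ closed_walk e p n.
Proof.
move=> uv eq_uv; have [pu [pu0 pux walk_pu]] := geodesic (e_conn u x).
have [pv [pv0 pvx walk_pv]] := geodesic (e_conn v x).
rewrite -eq_uv in pvx walk_pv; set d := dist e u x in pux walk_pu pvx walk_pv.
pose q := wcat pu d (fun k => pv (d - k)).
have walk_q : walk e q (d + d).
  by apply: walk_cat => //; [apply: walk_rev | rewrite subn0 pux].
have qv : q (d + d) = v by rewrite /q wcat_last ?subnn ?subn0 // pux.
exists (wcat q (d + d) (edge_walk v u)), (d + d + 1); split.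
  by rewrite addn1 /= addnn odd_double.
split; first by apply: walk_cat => //; rewrite ?qv //; apply: walk_edge; rewrite e_sym.
by rewrite wcat_last //= /wcat /q /= pu0.
Qed.

End Distance.

Definition cyc_next (n i j : nat) : Prop := j = i.+1 \/ (i.+1 = n /\ j = 0).

Lemma eqn_succ_modP n i j : i < n -> j < n -> reflect (cyc_next n i j) (j == i.+1 %% n).
Proof.
rewrite /cyc_next => lt_in lt_jn.
case: (ltnP i.+1 n) => [lt_i1n|le_ni1].
  by rewrite modn_small //; apply: (iffP eqP); lia.
by rewrite (_ : i.+1 = n) ?modnn; [apply: (iffP eqP) | ]; lia.
Qed.

Lemma cycle_relP n (i j : 'I_n) : reflect (cyc_next n i j \/ cyc_next n j i) (cycle_rel i j).
Proof.
by apply: (iffP orP) => -[]; [left | right | left | right];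
  apply/eqn_succ_modP.
Qed.

Lemma closed_walk_next (T : Type) (e : rel T) p n i j :
  closed_walk e p n -> i < n -> cyc_next n i j -> e (p i) (p j).
Proof.
move=> [walk_p closed_p] lt_in [->|[eq_i1n ->]]; first exact: walk_p.
by rewrite -closed_p -eq_i1n; apply: walk_p.
Qed.

Section EdgeMinimum.
Variables (T : finType) (e : rel T).

Lemma lG_leq u v : e u v -> lG e <= #|L e u v|.
Proof.
move=> uv; rewrite /lG; have : (u, v) \in index_enum (T * T)%type by rewrite mem_index_enum.
elim: (index_enum _) => [//|w s IHs]; rewrite in_cons big_cons.
case/orP => [/eqP <-|/IHs le_s]; first by rewrite uv geq_minl.
by case: ifP => // _; apply: leq_trans (geq_minr _ _) le_s.
Qed.

Lemma lG_geq m : m <= #|T| -> (forall u v, e u v -> m <= #|L e u v|) -> m <= lG e.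
Proof.
move=> le_mT le_mL; rewrite /lG; elim/big_ind: _ => // [x y|[u v] /le_mL //].
by rewrite leq_min => -> ->.
Qed.

End EdgeMinimum.

Section OddCycle.
Variables (T : finType) (e : rel T).
Hypotheses (e_sym : symmetric e) (e_irr : irreflexive e) (e_conn : connected e).
Hypothesis equidistant_uniq : forall u v x y, e u v ->
  dist e u x = dist e v x -> dist e u y = dist e v y -> x = y.

Lemma card_le_odd_closed_walk p n : closed_walk e p n -> odd n -> #|T| <= n.
Proof.
move=> cp odd_n.
have /fin_all_exists[f eq_f] := fun x => odd_closed_walk_equidistant e_conn e_sym x cp odd_n.
rewrite -[n]card_ord; apply: (@leq_card _ _ f) => x y eq_fxy.
by apply: (equidistant_uniq (cp.1 _ (ltn_ord (f x))) (eq_f x)); rewrite eq_fxy.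
Qed.

Lemma iso_odd_cycle_induced p n : closed_walk e p n -> odd n ->
    (forall a b, a < b < n -> p a != p b) ->
    (forall a b, a.+1 < b < n -> e (p a) (p b) -> (a == 0) && (b == n.-1)) ->
  iso_odd_cycle e.
Proof.
move=> cp odd_n uniq_p chordless.
have gt1n : 1 < n.
  case: n odd_n cp {uniq_p chordless} => [|[|//]] // _ [walk_p closed_p].
  by have := walk_p 0 isT; rewrite closed_p e_irr.
have le_Tn := card_le_odd_closed_walk cp odd_n.
pose f (i : 'I_n) := p i.
have inj_f : injective f.
  move=> i j; rewrite /f => eq_ij; apply: val_inj.
  by case: (ltngtP i j) => // lt; [have := uniq_p i j | have := uniq_p j i];
    rewrite lt ltn_ord eq_ij eqxx => /(_ isT).
have ge3n : 2 < n by rewrite ltn_neqAle gt1n andbT; apply: contraTneq odd_n => <-.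
exists n; split => //.
exists f; split; first by apply: inj_card_bij; rewrite ?card_ord.
move=> i j; apply/idP/cycle_relP => [ij|[next_ij|next_ji]].
- wlog lt_ij : i j ij / i < j.
    move=> wlog_ij; case: (ltngtP i j) => [|lt_ji|eq_ij]; first exact: wlog_ij.
      by rewrite e_sym in ij; case: (wlog_ij j i ij lt_ji); [right | left].
    by rewrite /f eq_ij e_irr in ij.
  have [lt_i1j|->] : i.+1 < j \/ j = i.+1 :> nat by lia.
    have /andP[/eqP i0 /eqP jn] := chordless i j ltac:(by rewrite lt_i1j /=) ij.
    by right; right; lia.
  by left; left.
- exact: closed_walk_next cp (ltn_ord i) next_ij.
- by rewrite /f e_sym; apply: closed_walk_next cp (ltn_ord j) next_ji.
Qed.

Lemma odd_closed_walk_iso p n : closed_walk e p n -> odd n -> iso_odd_cycle e.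
Proof.
elim/ltn_ind: n p => n IHn p cp odd_n.
have [/existsP[a /existsP[b /andP[lt_ab /eqP pab]]]|/existsPn no_repeat] :=
  boolP [exists a : 'I_n, exists b : 'I_n, (a < b) && (p a == p b)].
  have [q [m [lt_mn odd_m cq]]] := odd_closed_walk_repeat cp odd_n (a := a) (b := b)
    ltac:(by rewrite lt_ab ltn_ord) pab.
  exact: IHn cq odd_m.
have [/existsP[a /existsP[b /and3P[lt_ab chord ab]]]|/existsPn no_chord] :=
  boolP [exists a : 'I_n, exists b : 'I_n,
           [&& a.+1 < b, ~~ ((a == 0 :> nat) && (b == n.-1 :> nat)) & e (p a) (p b)]].
  have [q [m [lt_mn odd_m cq]]] := odd_closed_walk_chord e_sym cp odd_n
    (a := a) (b := b) ltac:(by rewrite lt_ab ltn_ord) chord ab.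
  exact: IHn cq odd_m.
apply: iso_odd_cycle_induced cp odd_n _ _ => [a b /andP[lt_ab lt_bn]|a b /andP[lt_ab lt_bn] ab].
  have /existsPn/(_ (Ordinal lt_bn)) := no_repeat (Ordinal (ltn_trans lt_ab lt_bn)).
  by rewrite /= lt_ab.
have /existsPn/(_ (Ordinal lt_bn)) := no_chord (Ordinal (ltn_trans (ltnW lt_ab) lt_bn)).
by rewrite /= lt_ab ab andbT negbK.
Qed.

End OddCycle.

Lemma lG_lt_card (T : finType) (e : rel T) : lG e < #|T| ->
  exists u v x, e u v /\ dist e u x = dist e v x.
Proof.
move=> lt_lG; have [/existsP[[u v] /andP[/= uv /existsP[x /eqP eq_x]]]|/existsPn none] :=
  boolP [exists w : T * T, e w.1 w.2 && [exists x, dist e w.1 x == dist e w.2 x]].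
  by exists u, v, x.
suff : #|T| <= lG e by rewrite leqNgt lt_lG.
apply: lG_geq => // u v uv; rewrite -cardsT subset_leq_card //.
apply/subsetP => x _; have := none (u, v); rewrite /= uv /= => /existsPn/(_ x).
by rewrite inE.
Qed.

Lemma lG_odd_cycle (T : finType) (e : rel T) :
  symmetric e -> irreflexive e -> connected e -> (exists u v, e u v) ->
  lG e = #|T| - 1 -> iso_odd_cycle e.
Proof.
move=> e_sym e_irr e_conn [u0 [v0 uv0]] lGE.
have equidistant_uniq u v x y : e u v ->
    dist e u x = dist e v x -> dist e u y = dist e v y -> x = y.
  move=> uv eq_x eq_y; have : #|~: L e u v| <= 1.
    by have := lG_leq uv; have := cardsC (L e u v); lia.
  by move/card_le1_eqP => all_eq; apply: all_eq; rewrite !inE ?eq_x ?eq_y eqxx.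
have card_gt0 : 0 < #|T| by apply/card_gt0P; exists u0.
have [|u [v [x [uv eq_x]]]] := lG_lt_card (e := e); first by rewrite lGE; lia.
have [p [n [odd_n cp]]] := equidistant_odd_closed_walk e_conn e_sym uv eq_x.
exact: odd_closed_walk_iso cp odd_n.
Qed.

Definition cyc_offset (n i j : nat) : nat := if i <= j then j - i else n + j - i.

Definition cyc_dist (n i j : nat) : nat := minn (cyc_offset n i j) (n - cyc_offset n i j).

Lemma cyc_offset_lt n a c : a < n -> c < n -> cyc_offset n a c < n.
Proof. by rewrite /cyc_offset; case: (leqP a c); lia. Qed.

Lemma cyc_offset_inj n a c c' : a < n -> c < n -> c' < n ->
  cyc_offset n a c = cyc_offset n a c' -> c = c'.
Proof. by rewrite /cyc_offset; case: (leqP a c); case: (leqP a c'); lia. Qed.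

Lemma cyc_offset_next n a b c : a < n -> b < n -> c < n -> cyc_next n a b ->
  (cyc_offset n a c = 0 /\ cyc_offset n b c = n.-1) \/ cyc_offset n a c = (cyc_offset n b c).+1.
Proof. by rewrite /cyc_offset /cyc_next; case: (leqP a c); case: (leqP b c); lia. Qed.

Lemma cyc_dist_next n a i j : a < n -> i < n -> j < n -> cyc_next n i j ->
  cyc_dist n a j <= (cyc_dist n a i).+1 /\ cyc_dist n a i <= (cyc_dist n a j).+1.
Proof. by rewrite /cyc_dist /cyc_offset /cyc_next; case: (leqP a i); case: (leqP a j); lia. Qed.

Lemma cyc_dist_equidistant n a b c : odd n -> 1 < n -> a < n -> b < n -> c < n ->
  cyc_next n a b -> cyc_dist n a c = cyc_dist n b c -> cyc_offset n a c = (n./2).+1.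
Proof.
move=> odd_n gt1n lt_an lt_bn lt_cn next_ab; rewrite /cyc_dist.
have := cyc_offset_next lt_an lt_bn lt_cn next_ab; have := cyc_offset_lt lt_an lt_cn.
have := odd_double_half n; rewrite odd_n -addnn.
move: (cyc_offset n a c) (cyc_offset n b c) (n./2) => d d' k; lia.
Qed.

Lemma cyc_dist_pred n a c : a < n -> c < n -> c != a ->
  exists2 b, b < n & (cyc_next n b c \/ cyc_next n c b) /\ (cyc_dist n a b).+1 = cyc_dist n a c.
Proof.
move=> lt_an lt_cn /eqP ne_ca; rewrite /cyc_dist.
have := cyc_offset_lt lt_an lt_cn.
have [closer|farther] := leqP (cyc_offset n a c) (n - cyc_offset n a c).
- have [c0|c_gt0] := posnP c.
    exists n.-1; [lia | split; [by left; right; lia |]].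
    by move: closer; rewrite /cyc_offset c0; case: (leqP a 0); case: (leqP a n.-1); lia.
  exists c.-1; [lia | split; [by left; left; lia |]].
  by move: closer; rewrite /cyc_offset; case: (leqP a c); case: (leqP a c.-1); lia.
- have [c_last|c_lt] := eqVneq c.+1 n.
    exists 0; [lia | split; [by right; right; lia |]].
    by move: farther; rewrite /cyc_offset; case: (leqP a c); case: (leqP a 0); lia.
  exists c.+1; [lia | split; [by right; left; lia |]].
  by move: farther; rewrite /cyc_offset; case: (leqP a c); case: (leqP a c.+1); lia.
Qed.

Section CycleGraph.
Variables (T : finType) (e : rel T) (n : nat) (f : 'I_n -> T) (g : T -> 'I_n).
Hypotheses (e_conn : connected e) (fK : cancel f g) (gK : cancel g f).
Hypothesis e_f : forall i j, e (f i) (f j) = cycle_rel i j.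

Lemma edge_cyc_next x y : e x y -> cyc_next n (g x) (g y) \/ cyc_next n (g y) (g x).
Proof. by rewrite -{1}(gK x) -{1}(gK y) e_f => /cycle_relP. Qed.

Lemma dist_cycle a x : dist e (f a) x = cyc_dist n a (g x).
Proof.
move: x; apply: dist_layering => //.
- by rewrite fK /cyc_dist /cyc_offset leqnn subnn min0n.
- move=> x y /edge_cyc_next [] next_xy;
    by have [] := cyc_dist_next (ltn_ord a) (ltn_ord _) (ltn_ord _) next_xy.
- move=> x ne_x; have ne_gx : (g x : nat) != a.
    by apply: contraNneq ne_x => /val_inj <-; rewrite gK.
  have [b lt_bn [next_bx dist_b]] := cyc_dist_pred (ltn_ord a) (ltn_ord (g x)) ne_gx.
  exists (f (Ordinal lt_bn)); last by rewrite fK.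
  by rewrite -(gK x) e_f; apply/cycle_relP; case: next_bx; [left | right].
Qed.

End CycleGraph.

Lemma odd_cycle_lG (T : finType) (e : rel T) :
  symmetric e -> connected e -> iso_odd_cycle e -> lG e = #|T| - 1.
Proof.
move=> e_sym e_conn [n [odd_n ge3n [f [f_bij e_f]]]].
have card_T : #|T| = n by rewrite -(bij_eq_card f_bij) card_ord.
have [g fK gK] := f_bij.
have gt1n : 1 < n by lia.
have dist_f := dist_cycle e_conn fK gK e_f.
apply/eqP; rewrite eqn_leq; apply/andP; split; last first.
  apply: lG_geq; first by lia.
  move=> u v uv; suff : #|~: L e u v| <= 1 by have := cardsC (L e u v); lia.
  apply/card_le1_eqP => x y; rewrite !inE !negbK -(gK u) -(gK v) !dist_f => /eqP eq_x /eqP eq_y.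
  apply: (can_inj gK); apply: val_inj.
  have gu := ltn_ord (g u); have gv := ltn_ord (g v).
  case: (edge_cyc_next gK e_f uv) => next.
  + apply: (cyc_offset_inj gu (ltn_ord _) (ltn_ord _)).
    by rewrite !(cyc_dist_equidistant odd_n gt1n gu gv (ltn_ord _) next).
  + apply: (cyc_offset_inj gv (ltn_ord _) (ltn_ord _)).
    by rewrite !(cyc_dist_equidistant odd_n gt1n gv gu (ltn_ord _) next).
have lt0n : 0 < n by lia.
pose p k := f (insubd (Ordinal lt0n) k).
have cp : closed_walk e p n.
  split; last by rewrite /p; congr f; apply: val_inj; rewrite !val_insubd ltnn lt0n.
  move=> k lt_kn; rewrite /p e_f; apply/cycle_relP; left; rewrite /cyc_next !val_insubd lt_kn.
  by case: (ltnP k.+1 n) => /= ?; lia.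
have [k eq_k] := odd_closed_walk_equidistant e_conn e_sym (f (Ordinal lt0n)) cp odd_n.
apply: leq_trans (lG_leq (cp.1 k (ltn_ord k))) _.
have : L e (p k) (p k.+1) \subset [set~ f (Ordinal lt0n)].
  by apply/subsetP => y; rewrite !inE; apply: contra => /eqP ->; rewrite eq_k.
by move/subset_leq_card; rewrite cardsC1; lia.
Qed.

Theorem theorem2p11 (T : finType) (e : rel T) :
  symmetric e -> irreflexive e -> connected e ->
  (exists u v : T, e u v) ->
  (lG e = #|T| - 1 <-> iso_odd_cycle e).
Proof.
move=> e_sym e_irr e_conn has_edge; split; first exact: lG_odd_cycle.
exact: odd_cycle_lG.
Qed.
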